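(* For every $k$ with $t\le k\le n$, the probability that the reverse reachable set of $B$ has exactly $k$ vertices equals $\alpha_k$, and \[ \alpha_k \le n^x \cdot \max_{\substack{\sum_i k_i = k,\ t_i\le k_i\le a_i}} a_{k_1,\dots,k_x}. \]
   Context: Random graph model: $V$ is a set of $n$ vertices, $B\subseteq V$ a target set with $|B|=t$, each $v\in V$ has a prescribed out-degree $d_v$ with $1\le d_{\min}\le d_v\le d_{\max}$ (constants), and for each $v$ independently its out-neighbour set is chosen uniformly among all $d_v$-element subsets of $V$. Let $d_1,\dots,d_x$ be the distinct out-degrees, $a_i$ the number of vertices of out-degree $d_i$, $t_i$ the number of vertices of $B$ of out-degree $d_i$. The reverse reachable set of $B$ is the set of vertices having a directed path to a vertex of $B$. For $S\supseteq B$ containing $k_i$ vertices of out-degree $d_i$, $R(k_1,\dots,k_x)$ is the probability that every vertex of $S$ has a directed path to $B$ inside $S$. For $k=\sum_i k_i$ with $t_i\le k_i\le a_i$, define $a_{k_1,\dots,k_x}=\left(\prod_{i=1}^x\binom{a_i-t_i}{k_i-t_i}\left(\binom{n-k}{d_i}/\binom{n}{d_i}\right)^{a_i-k_i}\right)R(k_1,\dots,k_x)$, where the factor $(\binom{n-k}{d_i}/\binom{n}{d_i})^{a_i-k_i}$ is taken to be $1$ when $a_i=k_i$, and $\alpha_k=\sum_{\sum_i k_i=k,\ t_i\le k_i\le a_i} a_{k_1,\dots,k_x}$. *)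

From mathcomp Require Import all_boot all_order all_algebra.
Set Implicit Arguments. Unset Strict Implicit. Unset Printing Implicit Defensive.
Import Order.TTheory GRing.Theory Num.Theory.
Local Open Scope ring_scope.

Section Model.
Variables (V : finType) (B : {set V}) (d : V -> nat).

(* a configuration assigns to each vertex its out-neighbour set *)
Definition cfg := {ffun V -> {set V}}.
Definition good (N : cfg) : bool := [forall v, #|N v| == d v].
(* independent uniform choices = uniform distribution on good configurations *)
Definition prob (E : pred cfg) : rat :=
  (#|[set N | good N && E N]|)%:R / (#|[set N | good N]|)%:R.

(* reverse reachable set of B (length-0 paths allowed, so B is included) *)
Definition rr (N : cfg) : {set V} :=
  [set v | [exists b in B, connect (fun u w => w \in N u) v b]].

Definition reach_inside (S : {set V}) (N : cfg) : bool :=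
  [forall v in S, [exists b in B,
     connect (fun u w => [&& u \in S, w \in S & w \in N u]) v b]].

Definition degs : seq nat := undup [seq d v | v <- enum V].
Definition ndeg : nat := size degs.
Definition degi (i : 'I_ndeg) : nat := nth 0%N degs i.
Definition acount (i : 'I_ndeg) : nat := #|[set v | d v == degi i]|.
Definition tcount (i : 'I_ndeg) : nat := #|[set v in B | d v == degi i]|.

Definition kvec := {ffun 'I_ndeg -> 'I_(#|V|.+1)}.

Definition has_counts (kv : kvec) (S : {set V}) : bool :=
  (B \subset S) && [forall i, #|[set v in S | d v == degi i]| == (kv i : nat)].

(* R(k_1,...,k_x): the probability for some (any) S with those counts *)
Definition Rk (kv : kvec) : rat :=
  if [pick S | has_counts kv S] is Some S0 then prob (reach_inside S0) else 0.

Definition ksum (kv : kvec) : nat := (\sum_i (kv i : nat))%N.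

Definition admissible (k : nat) (kv : kvec) : bool :=
  (ksum kv == k) && [forall i, (tcount i <= kv i <= acount i)%N].

Definition acoef (kv : kvec) : rat :=
  (\prod_i (('C(acount i - tcount i, kv i - tcount i))%:R *
      (('C(#|V| - ksum kv, degi i))%:R / ('C(#|V|, degi i))%:R)
        ^+ (acount i - kv i))) * Rk kv.

Definition alpha (k : nat) : rat := \sum_(kv : kvec | admissible k kv) acoef kv.

Definition amax (k : nat) : rat :=
  \big[Num.max/0]_(kv : kvec | admissible k kv) acoef kv.

End Model.

(* The reverse reachable set of B is S exactly when B is contained in S, every
   vertex of S reaches B inside S, and no vertex outside S has an out-neighbour in
   S.  The last two events depend on the out-neighbourhoods of the vertices inside,
   respectively outside, S, hence are independent.  The second one has probability
   prod_(v notin S) C(n - |S|, d v) / C(n, d v); the first one is R(k_1, ..., k_x),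
   because it is invariant under relabellings of V that preserve degrees, B and S.
   Grouping the sets S of size k by their degree profile (k_1, ..., k_x), each
   profile being realised by prod_i C(a_i - t_i, k_i - t_i) sets, gives alpha_k.
   For the bound, there are at most n^x admissible profiles: either all k_i < n,
   or there is a single degree class and the profile is determined by k. *)

From mathcomp Require Import all_boot all_order all_algebra.
Set Implicit Arguments. Unset Strict Implicit. Unset Printing Implicit Defensive.
Import Order.TTheory GRing.Theory Num.Theory.

Section ReverseReachable.
Variables (V : finType) (B : {set V}).
Implicit Types (N : cfg V) (S : {set V}).

Definition no_edge_into S N : bool := [forall v in ~: S, [disjoint N v & S]].

Lemma mem_rrP N v :
  reflect (exists2 b, b \in B & connect (fun u w => w \in N u) v b) (v \in rr B N).
Proof.
rewrite /rr inE; apply: (iffP existsP) => [[b /andP[]]|[b Bb reach_b]]; first by exists b.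
by exists b; rewrite Bb.
Qed.

Lemma subset_rr N : B \subset rr B N.
Proof. by apply/subsetP => b Hb; apply/mem_rrP; exists b. Qed.

Lemma rr_pred N u w : w \in N u -> w \in rr B N -> u \in rr B N.
Proof.
move=> Nuw /mem_rrP[b Hb Hc]; apply/mem_rrP; exists b => //.
exact: connect_trans (connect1 _) Hc.
Qed.

Lemma reach_inside_rr N : reach_inside B (rr B N) N.
Proof.
apply/forallP => v; apply/implyP => /mem_rrP[b Hb /connectP[p Hp Hl]].
apply/existsP; exists b; rewrite Hb /=.
elim: p v Hp Hl => [|w p IHp] v /=; first by move=> _ ->; exact: connect0.
move=> /andP[Nvw Hp] Hl; apply: connect_trans (connect1 _) (IHp w Hp Hl).
have w_rr : w \in rr B N by apply/mem_rrP; exists b => //; apply/connectP; exists p.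
by rewrite /= Nvw w_rr (rr_pred Nvw).
Qed.

Lemma no_edge_into_rr N : no_edge_into (rr B N) N.
Proof.
apply/forallP => v; apply/implyP; rewrite inE => v_rr.
by apply/pred0P => w /=; apply: contraNF v_rr => /andP[/rr_pred].
Qed.

Lemma rr_subset S N : B \subset S -> no_edge_into S N -> rr B N \subset S.
Proof.
move=> /subsetP BS /forallP noS; apply/subsetP => v /mem_rrP[b /BS bS /connectP[p Hp Hl]].
elim: p v Hp Hl => [|w p IHp] v /=; first by move=> _ <-.
move=> /andP[Nvw Hp] Hl; apply: contraT => vS.
have /pred0P /(_ w) : [disjoint N v & S] by apply: implyP (noS v) _; rewrite inE.
by rewrite /= Nvw (IHp w Hp Hl).
Qed.

Lemma reach_inside_subset_rr S N : reach_inside B S N -> S \subset rr B N.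
Proof.
move=> /forallP reachS; apply/subsetP => v vS.
have /existsP[b /andP[Hb Hc]] := implyP (reachS v) vS.
apply/mem_rrP; exists b => //; apply: connect_sub Hc => x y /and3P[_ _ Nxy].
exact: connect1.
Qed.

Lemma rr_eqE S N :
  (rr B N == S) = [&& B \subset S, reach_inside B S N & no_edge_into S N].
Proof.
apply/eqP/and3P => [<-|[BS reachS noS]].
  by split; [exact: subset_rr | exact: reach_inside_rr | exact: no_edge_into_rr].
by apply/eqP; rewrite eqEsubset rr_subset ?reach_inside_subset_rr.
Qed.

End ReverseReachable.

Lemma card_ffun_pred (I T : finType) (F : I -> pred T) :
  #|[set f : {ffun I -> T} | [forall i, F i (f i)]]| = (\prod_i #|F i|)%N.
Proof.
have := card_family F; rewrite foldrE big_image => <-; apply: eq_card => f.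
by rewrite inE; apply/forallP/familyP.
Qed.

Lemma card_ord_lt n : #|[pred m : 'I_n.+1 | (m < n)%N]| = n.
Proof.
transitivity #|predC1 (ord_max : 'I_n.+1)|; last by rewrite cardC1 card_ord.
by apply: eq_card => m; rewrite !inE -val_eqE /= ltn_neqAle -ltnS ltn_ord andbT.
Qed.

Lemma fibre_matching (T : finType) (K : eqType) (f g : T -> K) :
  (forall c, #|[set v | f v == c]| = #|[set v | g v == c]|) ->
  exists2 s : T -> T, injective s & forall v, g (s v) = f v.
Proof.
move=> eq_fibre.
pose F v := enum [set w | f w == f v]; pose G v := enum [set w | g w == f v].
pose s v := nth v (G v) (index v (F v)).
have inF v : v \in F v by rewrite mem_enum inE.
have size_FG v : size (F v) = size (G v) by rewrite -!cardE eq_fibre.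
have lt_index v : (index v (F v) < size (G v))%N by rewrite -size_FG index_mem.
have gs v : g (s v) = f v by have := mem_nth v (lt_index v); rewrite mem_enum inE => /eqP.
exists s => // v w eq_s.
have eq_f : f v = f w by rewrite -gs eq_s gs.
have eqF : F v = F w by rewrite /F eq_f.
have eqG : G v = G w by rewrite /G eq_f.
have lt_v := lt_index v; rewrite eqG in lt_v.
move: eq_s; rewrite /s eqG (set_nth_default w v lt_v) => /eqP.
rewrite nth_uniq ?enum_uniq // => /eqP eq_index.
by rewrite -(nth_index v (inF v)) eq_index -eqF nth_index // eqF inF.
Qed.

Lemma connect_homo (T : finType) (e e' : rel T) (s : T -> T) :
  (forall x y, e x y -> e' (s x) (s y)) ->
  forall x y, connect e x y -> connect e' (s x) (s y).
Proof.
move=> homo_s x _ /connectP[p e_p ->]; elim: p x e_p => [|z p IHp] x /=.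
  by move=> _; exact: connect0.
by move=> /andP[/homo_s/connect1 e'_xz /IHp]; apply: connect_trans.
Qed.

Section DegreeClasses.
Variables (V : finType) (B : {set V}) (d : V -> nat).
Implicit Types (S : {set V}) (kv : kvec d) (i : 'I_(ndeg d)).
Local Notation degi := (@degi V d).

Lemma d_in_degs v : d v \in degs d.
Proof. by rewrite mem_undup; apply: map_f; rewrite mem_enum. Qed.

Definition degidx (v : V) : 'I_(ndeg d) :=
  Ordinal (etrans (index_mem _ _) (d_in_degs v)).

Lemma degi_degidx v : degi (degidx v) = d v.
Proof. by rewrite /degi nth_index ?d_in_degs. Qed.

Lemma eq_degi v i : (d v == degi i) = (degidx v == i).
Proof.
apply/eqP/eqP => [dv|<-]; last by rewrite degi_degidx.
by apply: val_inj; rewrite /= dv /degi index_uniq ?undup_uniq.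
Qed.



Definition deg_count S i : nat := #|[set v in S | d v == degi i]|.

Definition profile S : kvec d := [ffun i => inord (deg_count S i)].

Lemma profileE S i : profile S i = deg_count S i :> nat.
Proof. by rewrite ffunE inordK // ltnS (leq_trans (max_card _)). Qed.

Lemma ksum_profile S : ksum (profile S) = #|S|.
Proof.
rewrite /ksum -sum1_card (partition_big degidx xpredT) //=; apply: eq_bigr => i _.
by rewrite profileE /deg_count -sum1_card; apply: eq_bigl => v; rewrite !inE eq_degi.
Qed.

Lemma has_counts_profile_eq kv S : has_counts B kv S -> profile S = kv.
Proof.
move=> /andP[_ /forallP counts]; apply/ffunP => i; apply: val_inj.
by rewrite /= profileE; apply/eqP: (counts i).
Qed.

Lemma has_counts_profile S : B \subset S -> has_counts B (profile S) S.
Proof. by move=> BS; rewrite /has_counts BS; apply/forallP => i; rewrite profileE. Qed.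

Lemma admissible_profile k S :
  B \subset S -> admissible B k (profile S) = (#|S| == k).
Proof.
move=> /subsetP BS; rewrite /admissible ksum_profile; case: eqP => //= _.
apply/forallP => i; rewrite profileE; apply/andP; split; apply: subset_leq_card.
  by apply/subsetP => v; rewrite !inE => /andP[/BS -> ->].
by apply/subsetP => v; rewrite !inE => /andP[_ ->].
Qed.

Definition new_class i : {set V} := [set v | (v \notin B) && (d v == degi i)].

Lemma card_new_class i : #|new_class i| = (acount i - tcount B i)%N.
Proof.
rewrite /acount /tcount -(cardsID B [set v | d v == degi i]).
have -> : [set v | d v == degi i] :&: B = [set v in B | d v == degi i].
  by apply/setP => v; rewrite !inE andbC.
by rewrite addKn; apply: eq_card => v; rewrite !inE andbC.
Qed.

Lemma deg_count_split S i :
  B \subset S -> deg_count S i = (tcount B i + #|S :&: new_class i|)%N.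
Proof.
move=> /subsetP BS; rewrite /deg_count /tcount -(cardsID B [set v in S | d v == degi i]).
have -> : [set v in S | d v == degi i] :&: B = [set v in B | d v == degi i].
  apply/setP => v; rewrite !inE.
  by case: (boolP (v \in B)) => [/BS ->|]; rewrite ?andbT ?andbF.
have -> // : [set v in S | d v == degi i] :\: B = S :&: new_class i.
by apply/setP => v; rewrite !inE; case: (v \in B); case: (v \in S).
Qed.

Lemma mem_new_class v i : (v \in new_class i) = (v \notin B) && (degidx v == i).
Proof. by rewrite inE eq_degi. Qed.

Lemma setU_new_classes S : B \subset S -> B :|: \bigcup_i (S :&: new_class i) = S.
Proof.
move=> /subsetP BS; apply/setP => v; rewrite inE.
case: (boolP (v \in B)) => [/BS -> // | vB] /=.
apply/bigcupP/idP => [[i _] /setIP[] //| vS].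
by exists (degidx v) => //; rewrite inE vS mem_new_class vB /=.
Qed.

Lemma card_sets_with_profile kv : (forall i, tcount B i <= kv i)%N ->
  #|[set S : {set V} | (B \subset S) && (profile S == kv)]| =
  (\prod_i 'C(acount i - tcount B i, kv i - tcount B i))%N.
Proof.
move=> tcount_le.
pose Fam i (T : {set V}) := (T \subset new_class i) && (#|T| == kv i - tcount B i)%N.
have card_Fam i : #|Fam i| = 'C(acount i - tcount B i, kv i - tcount B i).
  by rewrite -card_new_class -cards_draws; apply: eq_card => T; rewrite inE.
rewrite (eq_bigr _ (fun i _ => esym (card_Fam i))) -card_ffun_pred.
pose split_S S : {ffun 'I_(ndeg d) -> {set V}} := [ffun i => S :&: new_class i].
have split_inj :
    {in [set S : {set V} | (B \subset S) && (profile S == kv)] &, injective split_S}.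
  move=> S S'; rewrite !inE => /andP[BS _] /andP[BS' _] eq_split.
  rewrite -(setU_new_classes BS) -(setU_new_classes BS'); congr (B :|: _).
  apply: eq_bigr => i _.
  by have := congr1 (fun F : {ffun _ -> _} => F i) eq_split; rewrite !ffunE.
rewrite -(card_in_imset split_inj); apply: eq_card => T; apply/imsetP/idP.
  move=> [S]; rewrite inE => /andP[BS /eqP profS] ->; rewrite inE; apply/forallP => i.
  by rewrite /Fam ffunE subsetIr -profS profileE (deg_count_split _ BS) addKn /=.
rewrite inE => /forallP FamT.
have T_new_class i : T i \subset new_class i by case/andP: (FamT i).
pose S := B :|: \bigcup_i T i.
have split_SE : split_S S = T.
  apply/ffunP => i; rewrite ffunE; apply/setP => v; rewrite inE.
  apply/idP/idP => [/andP[/setUP[vB | /bigcupP[j _ vTj]]] | vTi].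
  - by rewrite mem_new_class vB.
  - have := subsetP (T_new_class j) v vTj; rewrite !mem_new_class => /andP[_ /eqP dv_j].
    by move=> /andP[_ /eqP dv_i]; rewrite -dv_i dv_j.
  - rewrite (subsetP (T_new_class i)) // andbT; apply/setUP; right.
    by apply/bigcupP; exists i.
have BS : B \subset S by apply: subsetUl.
exists S; rewrite ?split_SE // inE BS /=; apply/eqP/ffunP => i; apply: val_inj.
have /andP[_ /eqP card_Ti] := FamT i.
have S_new_class : S :&: new_class i = T i by rewrite -split_SE ffunE.
by rewrite /= profileE (deg_count_split _ BS) S_new_class card_Ti subnKC.
Qed.

End DegreeClasses.


Section Relabelling.
Variables (V : finType) (B : {set V}) (d : V -> nat).
Implicit Types (S : {set V}) (N : cfg V).

Lemma card_reach_inside_le S S' (s : V -> V) : injective s ->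
  (forall x, d (s x) = d x) -> (forall x, (s x \in B) = (x \in B)) ->
  (forall x, (s x \in S') = (x \in S)) ->
  (#|[set N | good d N && reach_inside B S N]| <=
   #|[set N | good d N && reach_inside B S' N]|)%N.
Proof.
move=> inj_s ds Bs Ss.
pose relabel N : cfg V := [ffun v => s @: N (invF inj_s v)].
have relabelE N x : relabel N (s x) = s @: N x by rewrite ffunE invF_f.
have inj_relabel : injective relabel.
  by move=> N M eqNM; apply/ffunP => x; apply: (imset_inj inj_s); rewrite -!relabelE eqNM.
rewrite -(card_imset _ inj_relabel); apply/subset_leq_card/subsetP => _ /imsetP[N + ->].
rewrite !inE => /andP[/forallP goodN /forallP reachN]; apply/andP; split.
  by apply/forallP => v; rewrite -(f_invF inj_s v) relabelE card_imset // ds; apply: goodN.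
apply/forallP => v; apply/implyP; rewrite -(f_invF inj_s v) Ss => vS.
have /existsP[b /andP[Bb reach_b]] := implyP (reachN _) vS.
apply/existsP; exists (s b); rewrite Bs Bb /=.
apply: connect_homo reach_b => x y /and3P[xS yS Nxy].
by rewrite !Ss xS yS relabelE mem_imset.
Qed.

Definition vertex_type S v : 'I_(ndeg d) * bool * bool := (degidx d v, v \in B, v \in S).

Lemma vertex_type_set S i b c : B \subset S ->
  [set v | vertex_type S v == (i, b, c)] =
  if b then (if c then [set v in B | degidx d v == i] else set0)
  else (if c then S :&: new_class B i else new_class B i :\: S).
Proof.
move=> /subsetP BS; apply/setP => v.
case: b; case: c; rewrite /vertex_type !inE ?eq_degi !xpair_eqE;
  by case: (boolP (v \in B)) => [/BS -> | _]; case: (v \in S); rewrite /= ?andbT ?andbF.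
Qed.

Lemma card_vertex_type_profile S S' :
  B \subset S -> B \subset S' -> profile d S = profile d S' -> forall c,
  #|[set v | vertex_type S v == c]| = #|[set v | vertex_type S' v == c]|.
Proof.
move=> BS BS' eq_prof [[i b] c]; rewrite !vertex_type_set //.
have eq_inter : #|S :&: new_class B i| = #|S' :&: new_class B i|.
  apply/eqP; rewrite -(eqn_add2l (tcount B i)) -!deg_count_split //.
  by rewrite -!profileE eq_prof.
by case: b; case: c; rewrite // !cardsD ![new_class B i :&: _]setIC eq_inter.
Qed.

Lemma card_reach_inside_le_type S S' (s : V -> V) : injective s ->
  (forall x, vertex_type S' (s x) = vertex_type S x) ->
  (#|[set N | good d N && reach_inside B S N]| <=
   #|[set N | good d N && reach_inside B S' N]|)%N.
Proof.
move=> inj_s type_s; apply: (card_reach_inside_le inj_s) => x; try by case: (type_s x).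
by have := congr1 (fun t => degi t.1.1) (type_s x); rewrite /= !degi_degidx.
Qed.

Lemma card_reach_inside_profile S S' :
  B \subset S -> B \subset S' -> profile d S = profile d S' ->
  #|[set N | good d N && reach_inside B S N]| =
  #|[set N | good d N && reach_inside B S' N]|.
Proof.
move=> BS BS' eq_prof.
have [s inj_s type_s] := fibre_matching (card_vertex_type_profile BS BS' eq_prof).
have [s' inj_s' type_s'] := fibre_matching (card_vertex_type_profile BS' BS (esym eq_prof)).
apply/eqP; rewrite eqn_leq (card_reach_inside_le_type inj_s) //.
exact: card_reach_inside_le_type inj_s' _.
Qed.

End Relabelling.

Section Admissible.
Variables (V : finType) (B : {set V}) (d : V -> nat).
Implicit Types (kv : kvec d) (i : 'I_(ndeg d)).

Lemma acount_gt0 i : (0 < acount i)%N.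
Proof.
have : degi i \in degs d by apply: mem_nth.
by rewrite mem_undup => /mapP[v _ dv]; apply/card_gt0P; exists v; rewrite inE dv.
Qed.

Lemma acount_lt_card i j : j != i -> (acount i < #|V|)%N.
Proof.
move=> neq_ji; have /card_gt0P[v] := acount_gt0 j; rewrite inE eq_degi => /eqP dv.
have v_notin : v \notin [set w | d w == degi i] by rewrite inE eq_degi dv.
by have := max_card (v |: [set w | d w == degi i]); rewrite cardsU1 v_notin.
Qed.

Lemma ksum_inj : (ndeg d <= 1)%N -> injective (@ksum V d).
Proof.
move=> le1 kv kv' eq_sum; have all_eq (i j : 'I_(ndeg d)) : i = j.
  by apply: (card_le1_eqP (A := 'I_(ndeg d))); rewrite ?card_ord.
apply/ffunP => i; apply: val_inj.
have ksumE w : ksum w = w i.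
  by rewrite /ksum (big_pred1 i) // => j /=; rewrite (all_eq j i) eqxx.
by rewrite /= -!ksumE.
Qed.

Lemma card_admissible k :
  (#|[pred kv : kvec d | admissible B k kv]| <= #|V| ^ ndeg d)%N.
Proof.
have [le1 | gt1] := leqP (ndeg d) 1.
  apply: (@leq_trans 1).
    apply/card_le1_eqP => kv kv'; rewrite !inE => /andP[/eqP eq_k _] /andP[/eqP eq_k' _].
    by apply: ksum_inj; rewrite ?eq_k ?eq_k'.
  rewrite expn_gt0 orbC; have [// | ndeg_gt0] := posnP (ndeg d).
  exact: leq_trans (acount_gt0 (Ordinal ndeg_gt0)) (max_card _).
have lt_card i : (acount i < #|V|)%N.
  have : (0 < #|predC1 i|)%N by rewrite cardC1 card_ord -ltnS (ltn_predK gt1).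
  by move=> /card_gt0P[j]; rewrite inE; apply: acount_lt_card.
apply: (@leq_trans #|[set kv : kvec d | [forall i, (kv i < #|V|)%N]]|).
  apply: subset_leq_card; apply/subsetP => kv; rewrite !inE => /andP[_ /forallP adm].
  by apply/forallP => i; have /andP[_ le_a] := adm i; apply: leq_ltn_trans le_a _.
rewrite (card_ffun_pred (fun _ (m : 'I_#|V|.+1) => (m < #|V|)%N)).
by under eq_bigr do rewrite card_ord_lt; rewrite prod_nat_const card_ord.
Qed.

End Admissible.

Local Open Scope ring_scope.

Lemma prod_setC_by_degree (V : finType) (d : V -> nat) (R : comPzSemiRingType)
    (f : nat -> R) (S : {set V}) :
  \prod_(v in ~: S) f (d v) =
  \prod_(i < ndeg d) f (degi i) ^+ (acount i - deg_count S i)%N.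
Proof.
rewrite (partition_big (degidx d) xpredT) //=; apply: eq_bigr => i _.
rewrite (eq_bigr (fun _ => f (degi i))) => [|v /andP[_ /eqP <-]]; last by rewrite degi_degidx.
rewrite prodr_const; congr (_ ^+ _).
rewrite /acount /deg_count -(cardsID S [set v | d v == degi i]).
have -> : [set v | d v == degi i] :&: S = [set v in S | d v == degi i].
  by apply/setP => v; rewrite !inE andbC.
by rewrite addKn; apply: eq_card => v; rewrite !inE -topredE /= !inE eq_degi.
Qed.

Section Merge.
Variables (V : finType) (d : V -> nat) (S : {set V}).
Implicit Types (N M : cfg V).

Definition merge N M : cfg V := [ffun v => if v \in S then N v else M v].

Lemma merge_good N M : good d N -> good d M -> good d (merge N M).
Proof.
by move=> /forallP goodN /forallP goodM; apply/forallP => v; rewrite ffunE; case: ifP.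
Qed.

Lemma mergeK N M : merge (merge N M) (merge M N) = N.
Proof. by apply/ffunP => v; rewrite !ffunE; case: (v \in S). Qed.

Lemma card_good_merge_indep (P Q : pred (cfg V)) :
  (forall N M, P (merge N M) = P N) -> (forall N M, Q (merge N M) = Q M) ->
  (#|[set N | good d N && (P N && Q N)]| * #|[set N | good d N]| =
   #|[set N | good d N && P N]| * #|[set N | good d N && Q N]|)%N.
Proof.
move=> mergeP mergeQ.
pose swap (NM : cfg V * cfg V) := (merge NM.1 NM.2, merge NM.2 NM.1).
have swapK : involutive swap by case=> N M; rewrite /swap /= !mergeK.
rewrite -!cardsX -(card_imset _ (inv_inj swapK)); apply: eq_card => -[N M].
apply/imsetP/idP => [[[N' M']] | ].
  rewrite !inE /= => /andP[/andP[goodN' /andP[PN' QN']] goodM'] [-> ->].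
  by rewrite !merge_good // mergeP mergeQ PN' QN'.
rewrite !inE /= => /andP[/andP[goodN PN] /andP[goodM QM]].
exists (swap (N, M)); last by rewrite swapK.
by rewrite !inE /= !merge_good // mergeP PN mergeQ QM.
Qed.

End Merge.

Section Probability.
Variables (V : finType) (B : {set V}) (d : V -> nat).
Hypothesis d_le : forall v, (d v <= #|V|)%N.
Implicit Types (S : {set V}) (N : cfg V) (P Q : pred (cfg V)).

Lemma card_good : #|[set N | good d N]| = (\prod_v 'C(#|V|, d v))%N.
Proof.
rewrite -(eq_card (A := [set N : cfg V | [forall v, #|N v| == d v]])) => [|N];
  last by rewrite !inE.
rewrite (card_ffun_pred (fun v (A : {set V}) => #|A| == d v)).
by apply: eq_bigr => v _; rewrite -card_draws; apply: eq_card => A; rewrite inE.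
Qed.

Lemma card_good_no_edge_into S : #|[set N | good d N && no_edge_into S N]| =
  (\prod_v (if v \in S then 'C(#|V|, d v) else 'C(#|V| - #|S|, d v)))%N.
Proof.
pose F v (A : {set V}) := (#|A| == d v) && ((v \in S) || [disjoint A & S]).
transitivity #|[set N : cfg V | [forall v, F v (N v)]]|.
  apply: eq_card => N; rewrite !inE.
  apply/andP/forallP => [[/forallP goodN /forallP noS] v | FN].
    by rewrite /F goodN /=; have := noS v; rewrite inE; case: (v \in S).
  split; apply/forallP => v; have /andP[goodv outS] := FN v; first exact: goodv.
  by rewrite inE; apply/implyP => /negbTE vS; move: outS; rewrite vS.
rewrite card_ffun_pred; apply: eq_bigr => v _; case: ifP => vS.
  by rewrite -card_draws; apply: eq_card => A; rewrite !inE -topredE /= /F vS andbT.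
rewrite -(cardsC S) addKn -cards_draws; apply: eq_card => A.
by rewrite !inE -topredE /= /F vS disjoints_subset andbC.
Qed.

Lemma card_good_gt0 : (0 < #|[set N | good d N]|)%N.
Proof. by rewrite card_good prodn_cond_gt0 // => v _; rewrite bin_gt0. Qed.

Lemma eq_prob P Q : P =1 Q -> prob d P = prob d Q.
Proof.
by move=> eqPQ; rewrite /prob; congr (_%:R / _); apply: eq_card => N; rewrite !inE eqPQ.
Qed.

Lemma prob_pred0 : prob d pred0 = 0.
Proof. by rewrite /prob (eq_card (B := pred0)) ?card0 ?mul0r // => N; rewrite !inE andbF. Qed.

Lemma prob_partition (J : finType) (f : cfg V -> J) (Q : pred J) P :
  (forall N, P N = Q (f N)) -> prob d P = \sum_(j | Q j) prob d (fun N => f N == j).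
Proof.
move=> PQ; rewrite /prob -mulr_suml -natr_sum; congr (_%:R / _).
rewrite -sum1_card (partition_big f Q) => [|N]; last by rewrite inE PQ => /andP[].
apply: eq_bigr => j Qj; rewrite -sum1_card; apply: eq_bigl => N.
by rewrite !inE PQ; case: eqP => [->|]; rewrite ?Qj ?andbT ?andbF.
Qed.

Lemma prob_merge_indep S P Q :
  (forall N M, P (merge S N M) = P N) -> (forall N M, Q (merge S N M) = Q M) ->
  prob d (fun N => P N && Q N) = prob d P * prob d Q.
Proof.
move=> mergeP mergeQ.
have := congr1 (fun n => n%:R : rat) (card_good_merge_indep d mergeP mergeQ).
rewrite /= !natrM /prob mulrACA -invfM => <-.
by rewrite invfM mulrA mulfK // pnatr_eq0 -lt0n card_good_gt0.
Qed.

Lemma prob_no_edge_into S : prob d (no_edge_into S) =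
  \prod_(v in ~: S) (('C(#|V| - #|S|, d v))%:R / ('C(#|V|, d v))%:R).
Proof.
rewrite /prob card_good_no_edge_into card_good !natr_prod -prodfV -big_split /=.
rewrite [RHS]big_mkcond /=; apply: eq_bigr => v _; rewrite inE.
by case: ifP => //= _; rewrite divff // pnatr_eq0 -lt0n bin_gt0.
Qed.

Lemma reach_inside_merge S N M : reach_inside B S (merge S N M) = reach_inside B S N.
Proof.
apply: eq_forallb => v; congr (_ ==> _); apply: eq_existsb => b; congr (_ && _).
by apply: eq_connect => x y; rewrite ffunE; case: (x \in S).
Qed.

Lemma no_edge_into_merge S N M : no_edge_into S (merge S N M) = no_edge_into S M.
Proof. by apply: eq_forallb => v; rewrite ffunE inE; case: (v \in S). Qed.

Lemma prob_rr_eq S : prob d (fun N => rr B N == S) =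
  if B \subset S then prob d (reach_inside B S) * prob d (no_edge_into S) else 0.
Proof.
under eq_prob => N do rewrite rr_eqE.
case: ifP => [BS | _]; last by rewrite -prob_pred0; apply: eq_prob.
rewrite -(prob_merge_indep (S := S)) => [|N M|N M]; last by rewrite no_edge_into_merge.
  by apply: eq_prob => N.
by rewrite reach_inside_merge.
Qed.

Lemma Rk_profile S : B \subset S -> Rk B (profile d S) = prob d (reach_inside B S).
Proof.
move=> BS; rewrite /Rk; case: pickP => [S0 countsS0 | no_S0]; last first.
  by have := no_S0 S; rewrite has_counts_profile.
have /andP[BS0 _] := countsS0.
by rewrite /prob (card_reach_inside_profile BS0 BS (has_counts_profile_eq countsS0)).
Qed.

Definition escape_factor (kv : kvec d) : rat :=
  \prod_i (('C(#|V| - ksum kv, degi i))%:R / ('C(#|V|, degi i))%:R) ^+ (acount i - kv i).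

Lemma prob_no_edge_into_profile S :
  prob d (no_edge_into S) = escape_factor (profile d S).
Proof.
pose ratio a : rat := ('C(#|V| - #|S|, a))%:R / ('C(#|V|, a))%:R.
rewrite prob_no_edge_into (prod_setC_by_degree d ratio).
by rewrite /escape_factor ksum_profile; apply: eq_bigr => i _; rewrite profileE.
Qed.

Lemma prob_card_rr k : prob d (fun N => #|rr B N| == k) = alpha B d k.
Proof.
rewrite (prob_partition (f := rr B) (Q := fun S => #|S| == k)) //.
under eq_bigr => S _ do rewrite prob_rr_eq.
rewrite -big_mkcondr /= (partition_big (profile d) (admissible B k)) => [|S /andP[/eqP <- BS]];
  last by rewrite admissible_profile.
apply: eq_bigr => kv /andP[/eqP ksum_kv /forallP tcount_kv].
rewrite (eq_bigr (fun _ => Rk B kv * escape_factor kv)) => [|S /andP[/andP[_ BS] /eqP <-]];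
  last by rewrite Rk_profile // prob_no_edge_into_profile.
rewrite sumr_const (eq_card (B := [set S : {set V} | (B \subset S) && (profile d S == kv)]))
  => [|S]; last first.
  rewrite unfold_in /= inE; case: (profile d S =P kv) => [prof|]; rewrite ?andbF //.
  by rewrite -ksum_kv -prof ksum_profile eqxx andbT.
rewrite card_sets_with_profile => [|i]; last by case/andP: (tcount_kv i).
by rewrite /acoef big_split /= -natr_prod -[LHS]mulr_natl mulrCA mulrC.
Qed.

End Probability.

Lemma alpha_le_amax (V : finType) (B : {set V}) (d : V -> nat) k :
  alpha B d k <= #|V|%:R ^+ ndeg d * amax B d k.
Proof.
have amax_ge0 : 0 <= amax B d k by apply: bigmax_ge_id.
apply: (@le_trans _ _ (\sum_(kv : kvec d | admissible B k kv) amax B d k)).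
  by apply: ler_sum => kv adm; apply: le_bigmax_cond.
rewrite sumr_const -(mulr_natl (amax B d k)); apply: ler_wpM2r => //.
by rewrite -natrX ler_nat card_admissible.
Qed.

Unset Implicit Arguments.

Theorem lemma3 (V : finType) (B : {set V}) (d : V -> nat) (dmin dmax : nat) :
  (1 <= dmin)%N ->
  (forall v, dmin <= d v <= dmax)%N ->
  (dmax <= #|V|)%N ->
  forall k : nat, (#|B| <= k <= #|V|)%N ->
    prob d (fun N => #|rr B N| == k) = alpha B d k /\
    alpha B d k <= (#|V|%:R) ^+ (ndeg d) * amax B d k.
Proof.
move=> _ d_bounds dmax_le k _; split; last exact: alpha_le_amax.
by apply: prob_card_rr => v; case/andP: (d_bounds v) => _ /leq_trans; apply.
Qed.
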